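(* Let $G$ be a bipartite graph with ordered colour classes $A,B$ whose edge set is partitioned into $k$ monotone matchings $E_1,\dots,E_k$. Let $G'$ be the unraveling of $G$ with respect to this partition. Then $G'$ is $3$-monotone.
   Context: For a bipartite graph with ordered colour classes $(v_1,\dots,v_n)$ and $(w_1,\dots,w_m)$, edges $v_iw_j$ and $v_kw_\ell$ cross if $i<k$ and $\ell<j$; a matching is monotone if no two of its edges cross; a bipartite graph is $d$-monotone if, for some ordering of its colour classes, its edge set is the union of $d$ monotone matchings. Given a graph $G$ with a partition $E_1,\dots,E_k$ of $E(G)$, the unraveling $G'$ has vertex set $V(G)\times[1,k]=\{v_i: v\in V(G), i\in[1,k]\}$, with an edge $v_iw_i$ for each edge $vw\in E_i$ and each $i\in[1,k]$, and an edge $v_iv_{i+1}$ for each $v\in V(G)$ and $i\in[1,k-1]$. *)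

From mathcomp Require Import all_boot.
Set Implicit Arguments. Unset Strict Implicit. Unset Printing Implicit Defensive.

(* ---------- The input graph G ----------
   Colour class A = (v_0,...,v_{n-1}) is 'I_n, B = (w_0,...,w_{m-1}) is 'I_m,
   both ordered by their natural order. *)

Definition bip_monotone_matching (n m : nat) (M : 'I_n -> 'I_m -> bool) : Prop :=
  forall (i k : 'I_n) (j l : 'I_m), M i j -> M k l -> (i, j) != (k, l) ->
    [/\ i != k, j != l & ~~ ((i < k) && (l < j))].

Definition monotone_partition (n m k : nat) (E : 'I_n -> 'I_m -> bool)
    (c : 'I_n -> 'I_m -> 'I_k) : Prop :=
  forall s : 'I_k, bip_monotone_matching (fun i j => E i j && (c i j == s)).

(* ---------- The unraveling G' ----------
   Vertex set V(G) x [1,k], encoded as ('I_n + 'I_m) * 'I_k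
   (index s : 'I_k stands for s+1 in [1,k]). *)
Definition unravel_adj (n m k : nat) (E : 'I_n -> 'I_m -> bool)
    (c : 'I_n -> 'I_m -> 'I_k) : rel (('I_n + 'I_m) * 'I_k)%type :=
  fun x y =>
    let: (u, s) := x in
    let: (u', t) := y in
    ((u == u') && ((s.+1 == t :> nat) || (t.+1 == s :> nat)))
    || match u, u' with
       | inl i, inr j => (s == t) && E i j && (c i j == s)
       | inr j, inl i => (s == t) && E i j && (c i j == s)
       | _, _ => false
       end.

(* ---------- d-monotone for a general graph (V, adj) ----------
   A bipartition is given by X (one colour class) and its complement;
   the orderings of both colour classes are encoded by an injective
   rank function r : V -> nat; edges are taken as pairs (a,b), a in X,
   b not in X. *)
Definition crossing (V : Type) (r : V -> nat) (a b a' b' : V) : bool :=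
  (r a < r a') && (r b' < r b).

Definition monotone_matching (V : eqType) (r : V -> nat) (M : V -> V -> bool) : Prop :=
  forall a b a' b', M a b -> M a' b' -> (a, b) != (a', b') ->
    [/\ a != a', b != b' & ~~ crossing r a b a' b'].

Definition d_monotone (V : finType) (adj : rel V) (d : nat) : Prop :=
  exists (X : {set V}) (r : V -> nat) (col : V -> V -> 'I_d),
    [/\ injective r,
        (forall x y, adj x y -> (x \in X) != (y \in X)) &
        (forall t : 'I_d, monotone_matching r
            (fun a b => [&& a \in X, b \notin X, adj a b & col a b == t]))].

(** Order the vertices of the unraveling layer by layer, and inside a layer put
    A before B; colour a vertex black when it lies in A on an even layer or in B
    on an odd one.  Every edge then joins two colours, and the edges split into
    three monotone matchings: the edges inside the layers (each layer s carries
    only the monotone matching E_s, and distinct layers are ordered one after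
    the other), the edges going up one layer and the edges going down one layer
    (both shift the rank by exactly one layer, so they preserve the order). *)

From mathcomp Require Import all_boot zify.
Set Implicit Arguments. Unset Strict Implicit.

Definition order_preserving_matching (V : eqType) (r : V -> nat) (M : V -> V -> bool)
  : Prop :=
  forall a b a' b', M a b -> M a' b' -> (a, b) != (a', b') ->
    a != a' /\ (r a < r a') = (r b < r b').

Section MonotoneMatchings.
Variables (V : eqType) (r : V -> nat).
Hypothesis r_inj : injective r.

Lemma order_preserving_monotone_matching (M : V -> V -> bool) :
  order_preserving_matching r M -> monotone_matching r M.
Proof.
move=> opM a b a' b' Mab Mab' ne; have [neq_a ltab] := opM _ _ _ _ Mab Mab' ne.
have ne' : (a', b') != (a, b) by rewrite eq_sym.
have [_ ltab'] := opM _ _ _ _ Mab' Mab ne'.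
split=> //; last by rewrite /crossing ltab; case: ltngtP.
apply: contra neq_a => /eqP eq_b; subst b'; apply/eqP/r_inj.
by move: ltab ltab'; rewrite !ltnn; case: ltngtP.
Qed.

Lemma monotone_matching_sub (M M' : V -> V -> bool) :
  (forall a b, M a b -> M' a b) -> monotone_matching r M' -> monotone_matching r M.
Proof. by move=> sub mono a b a' b' /sub Mab /sub Mab'; apply: mono. Qed.

Lemma shift_order_preserving (M : V -> V -> bool) (d1 d2 : nat) :
  (forall a b, M a b -> r b + d1 = r a + d2) -> order_preserving_matching r M.
Proof.
move=> shift a b a' b' /shift eq_ab /shift eq_ab' ne; split; last lia.
apply: contra ne => /eqP eq_a; subst a'.
suff -> : b = b' by [].
by apply: r_inj; lia.
Qed.

Lemma layered_order_preserving (l : V -> nat) (M : V -> V -> bool) :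
  (forall x y, l x < l y -> r x < r y) ->
  (forall a b, M a b -> l a = l b) ->
  (forall a b a' b', M a b -> M a' b' -> l a = l a' -> (a, b) != (a', b') ->
     a != a' /\ (r a < r a') = (r b < r b')) ->
  order_preserving_matching r M.
Proof.
move=> r_mono flat in_layer a b a' b' Mab Mab' ne.
have l_ab := flat _ _ Mab; have l_ab' := flat _ _ Mab'.
case: (ltngtP (l a) (l a')) => [lt_l | lt_l | eq_l]; last exact: in_layer.
- split; first by apply: contraTneq lt_l => ->; rewrite ltnn.
  by rewrite !r_mono // -?l_ab -?l_ab'.
- split; first by apply: contraTneq lt_l => ->; rewrite ltnn.
  have lt_ra := r_mono _ _ lt_l.
  have lt_rb : r b' < r b by rewrite r_mono -?l_ab -?l_ab'.
  by apply/idP/idP; lia.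
Qed.

End MonotoneMatchings.

Lemma bip_monotone_matching_order (n m : nat) (M : 'I_n -> 'I_m -> bool)
    (i i' : 'I_n) (j j' : 'I_m) :
  bip_monotone_matching M -> M i j -> M i' j' -> (i, j) != (i', j') ->
  [/\ i != i', j != j' & (i < i') = (j < j')].
Proof.
move=> mono Mij Mij' ne; have [ne_i ne_j nocross] := mono _ _ _ _ Mij Mij' ne.
have ne' : (i', j') != (i, j) by rewrite eq_sym.
have [_ _ nocross'] := mono _ _ _ _ Mij' Mij ne'.
split=> //; move: ne_i ne_j nocross nocross'.
by case: (ltngtP i i') => [||/val_inj->]; case: (ltngtP j j') => [||/val_inj->];
  rewrite ?eqxx.
Qed.

Section Unraveling.
Variables (n m k : nat) (E : 'I_n -> 'I_m -> bool) (c : 'I_n -> 'I_m -> 'I_k).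
Local Notation V := (('I_n + 'I_m) * 'I_k)%type.
Local Notation adj := (unravel_adj E c).

Definition base_code (u : 'I_n + 'I_m) : nat :=
  match u with inl i => i | inr j => n + j end.

Definition unravel_rank (x : V) : nat := x.2 * (n + m) + base_code x.1.

Definition unravel_side : {set V} := [set x : V | is_inl x.1 (+) odd x.2].

Definition unravel_colour (x y : V) : 'I_3 :=
  if x.2 < y.2 then @Ordinal 3 1 isT
  else if y.2 < x.2 then @Ordinal 3 2 isT else @Ordinal 3 0 isT.

Lemma base_code_lt u : base_code u < n + m.
Proof. by case: u => [i|j] /=; [have := ltn_ord i | have := ltn_ord j]; lia. Qed.

Lemma base_code_inj : injective base_code.
Proof.
case=> [i|j] [i'|j'] /= eq_code.
- by congr inl; apply: val_inj.
- by have := ltn_ord i; lia.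
- by have := ltn_ord i'; lia.
- by congr inr; apply: val_inj => /=; lia.
Qed.

Lemma unravel_rank_inj : injective unravel_rank.
Proof.
case=> [u s] [u' t] /(congr1 (edivn^~ (n + m))).
rewrite /unravel_rank /= !edivn_eq ?base_code_lt // => -[/val_inj-> /base_code_inj->].
by [].
Qed.

Lemma unravel_rank_layer_lt (x y : V) : x.2 < y.2 -> unravel_rank x < unravel_rank y.
Proof.
move=> lt_xy; have := base_code_lt x.1.
have : x.2.+1 * (n + m) <= y.2 * (n + m) by rewrite leq_mul2r lt_xy orbT.
by rewrite /unravel_rank mulSn; lia.
Qed.

Lemma unravel_rank_same_layer (u u' : 'I_n + 'I_m) (s : 'I_k) :
  (unravel_rank (u, s) < unravel_rank (u', s)) = (base_code u < base_code u').
Proof. exact: ltn_add2l. Qed.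

Lemma unravel_adj_sym : symmetric adj.
Proof.
case=> [u s] [u' t]; rewrite /unravel_adj.
case: u u' => [i|j] [i'|j'] /=; try by rewrite !orbF eq_sym [X in _ = _ && X]orbC.
all: by rewrite [t == s]eq_sym; case: eqP => // ->.
Qed.

Lemma unravel_adj_up (x y : V) : adj x y -> x.2 < y.2 ->
  unravel_rank y = unravel_rank x + (n + m).
Proof.
case: x y => [u s] [u' t] /orP[/andP[/eqP<- /orP[]/eqP] | ] /=.
- by rewrite /unravel_rank /= => <- _; rewrite mulSn; lia.
- by move=> <-; rewrite ltnNge leqnSn.
- by case: u u' => [i|j] [i'|j'] // /andP[/andP[/eqP-> _] _]; rewrite ltnn.
Qed.

Lemma unravel_adj_same_layer (x y : V) : adj x y -> x.2 = y.2 ->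
  exists i j, [/\ E i j, c i j = x.2 &
    (x.1, y.1) = (inl i, inr j) \/ (x.1, y.1) = (inr j, inl i)].
Proof.
case: x y => [u s] [u' t] /orP[/andP[_ /orP[]/eqP layer_step] | ] /=.
- by move/(congr1 val) => /=; lia.
- by move/(congr1 val) => /=; lia.
case: u u' => [i|j] [i'|j'] // /andP[/andP[_ Eij] /eqP cij] _.
- by exists i, j'; split=> //; left.
- by exists i', j; split=> //; right.
Qed.

Lemma unravel_side_bipartite x y :
  adj x y -> (x \in unravel_side) != (y \in unravel_side).
Proof.
rewrite !inE; case: x y => [u s] [u' t] /orP[/andP[/eqP<- /orP[]/eqP<-] | ] /=.
- by case: (is_inl u); case: (odd s).
- by case: (is_inl u); case: (odd t).
- by case: u u' => [i|j] [i'|j'] // /andP[/andP[/eqP-> _] _] /=; case: (odd _).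
Qed.

Lemma up_edges_monotone :
  monotone_matching unravel_rank (fun x y => adj x y && (x.2 < y.2)).
Proof.
apply: (order_preserving_monotone_matching unravel_rank_inj).
apply: (shift_order_preserving unravel_rank_inj (d1 := 0) (d2 := n + m)).
by move=> x y /andP[xy lt_xy]; rewrite addn0; apply: unravel_adj_up.
Qed.

Lemma down_edges_monotone :
  monotone_matching unravel_rank (fun x y => adj x y && (y.2 < x.2)).
Proof.
apply: (order_preserving_monotone_matching unravel_rank_inj).
apply: (shift_order_preserving unravel_rank_inj (d1 := n + m) (d2 := 0)).
move=> x y /andP[xy lt_yx]; rewrite addn0.
by apply/esym/unravel_adj_up; rewrite // unravel_adj_sym.
Qed.

Hypothesis partition_monotone : monotone_partition E c.

Lemma flat_edges_order_preserving_in_layer (x y x' y' : V) :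
  [&& x \in unravel_side, y \notin unravel_side, adj x y & x.2 == y.2] ->
  [&& x' \in unravel_side, y' \notin unravel_side, adj x' y' & x'.2 == y'.2] ->
  x.2 = x'.2 :> nat -> (x, y) != (x', y') ->
  x != x' /\ (unravel_rank x < unravel_rank x') = (unravel_rank y < unravel_rank y').
Proof.
case: x y x' y' => [u s] [v t] [u' s'] [v' t'] /=.
move=> /and4P[uX _ uv /eqP st] /and4P[uX' _ uv' /eqP st'] /val_inj ss' ne.
subst t s' t'; rewrite !inE /= in uX uX'.
have [i [j [Eij cij /= orient]]] :=
  unravel_adj_same_layer (x := (u, s)) (y := (v, s)) uv erefl.
have [i' [j' [Eij' cij' /= orient']]] :=
  unravel_adj_same_layer (x := (u', s)) (y := (v', s)) uv' erefl.
have in_class_s : forall i0 j0, E i0 j0 -> c i0 j0 = s -> E i0 j0 && (c i0 j0 == s).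
  by move=> ? ? -> ->; rewrite eqxx.
case: orient orient' uX uX' ne => [[-> ->]|[-> ->]] [[-> ->]|[-> ->]] /=;
  try by case: (odd s).
all: move=> _ _ ne.
all: have ne_ij : (i, j) != (i', j') by apply: contraNneq ne => -[<- <-].
all: have [ne_i ne_j lt_ij] := bip_monotone_matching_order
  (partition_monotone (s := s)) (in_class_s _ _ Eij cij) (in_class_s _ _ Eij' cij') ne_ij.
all: rewrite !unravel_rank_same_layer /= ?ltn_add2l.
- by split=> //; apply: contra ne_i => /eqP[->].
- by split; [apply: contra ne_j => /eqP[->] | rewrite lt_ij].
Qed.

Lemma flat_edges_monotone : monotone_matching unravel_rank
  (fun x y => [&& x \in unravel_side, y \notin unravel_side, adj x y & x.2 == y.2]).
Proof.
apply: (order_preserving_monotone_matching unravel_rank_inj).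
apply: (layered_order_preserving (l := fun x : V => val x.2)).
- exact: unravel_rank_layer_lt.
- by move=> x y /and4P[_ _ _ /eqP->].
- exact: flat_edges_order_preserving_in_layer.
Qed.

Lemma unravel_3_monotone : d_monotone adj 3.
Proof.
exists unravel_side, unravel_rank, unravel_colour; split.
- exact: unravel_rank_inj.
- exact: unravel_side_bipartite.
case=> [[|[|[|//]]] ?].
- apply: monotone_matching_sub flat_edges_monotone => x y /and4P[-> -> -> /=].
  by rewrite /unravel_colour; case: ltngtP => // /val_inj->.
- apply: monotone_matching_sub up_edges_monotone => x y /and4P[_ _ -> /=].
  by rewrite /unravel_colour; case: ltngtP.
- apply: monotone_matching_sub down_edges_monotone => x y /and4P[_ _ -> /=].
  by rewrite /unravel_colour; case: ltngtP.
Qed.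

End Unraveling.

Theorem lemma8 (n m k : nat) (E : 'I_n -> 'I_m -> bool) (c : 'I_n -> 'I_m -> 'I_k) :
  monotone_partition E c -> d_monotone (unravel_adj E c) 3.
Proof. exact: unravel_3_monotone. Qed.
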